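(* Let $a,b,x$ be non-commuting indeterminates and define polynomials $d_n=d_n(a,b,x)\in\mathbb{Z}\langle a,b,x\rangle$ for $n\ge 1$ by $$d_1=1,\qquad d_n=d_{n-1}\,x+\sum_{k=2}^{n-1} d_{n-k}\,a\,d_k\,b\quad (n\ge 2),$$ and set $c_n(a,b,x)=a\,d_n(a,b,x)\,b$ for $n\ge1$. Then, in the ring $\mathbb{Z}\langle\langle a,b\rangle\rangle$ of formal power series in the non-commuting variables $a,b$, $$1-\sum_{n=1}^{\infty} c_n(a,b,ab-ba)=\Big(\sum_{n\ge 0}a^nb^n\Big)^{-1}.$$
   Context: $\mathbb{Z}\langle\langle a,b\rangle\rangle$ denotes formal power series in non-commuting variables $a,b$ with integer coefficients; a series with constant term $1$ is invertible there. $c_n(a,b,ab-ba)$ denotes the polynomial obtained from $c_n(a,b,x)$ by substituting $x\mapsto ab-ba$; since $c_n(a,b,ab-ba)$ is homogeneous of degree $2n$ in $a,b$, the infinite sum converges formally. *)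

From HB Require Import structures.
From mathcomp Require Import all_boot all_order all_algebra.
Set Implicit Arguments. Unset Strict Implicit. Unset Printing Implicit Defensive.
Import Order.TTheory GRing.Theory Num.Theory.
Local Open Scope ring_scope.

Inductive letter3 := La | Lb | Lx.

(* A polynomial in Z<a,b,x> is a formal Z-linear combination of words
   (monomials) over the alphabet {a,b,x}, given as a list of
   (coefficient, word) pairs. *)
Definition ncpoly := seq (int * seq letter3).

Definition padd (p q : ncpoly) : ncpoly := p ++ q.
Definition pmul (p q : ncpoly) : ncpoly :=
  [seq ((m.1 * n.1)%R, m.2 ++ n.2) | m <- p, n <- q].
Definition pone : ncpoly := [:: (1%R, [::])].
Definition pa : ncpoly := [:: (1%R, [:: La])].
Definition pb : ncpoly := [:: (1%R, [:: Lb])].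
Definition px : ncpoly := [:: (1%R, [:: Lx])].
Definition psum (ps : seq ncpoly) : ncpoly := foldr padd [::] ps.

(* Given ds = [:: d_1; ...; d_(n-1)], compute
   d_n = d_(n-1) x + sum_(k=2)^(n-1) d_(n-k) a d_k b. *)
Definition dnext (ds : seq ncpoly) (n : nat) : ncpoly :=
  let D k := nth [::] ds k.-1 in
  padd (pmul (D n.-1) px)
       (psum [seq pmul (pmul (pmul (D (n - k)%N) pa) (D k)) pb
             | k <- iota 2 (n - 2)]).

(* dlist n = [:: d_1; ...; d_n] *)
Fixpoint dlist (n : nat) : seq ncpoly :=
  match n with
  | 0 => [::]
  | m.+1 => if m is 0 then [:: pone] else rcons (dlist m) (dnext (dlist m) n)
  end.

Definition d (n : nat) : ncpoly := nth [::] (dlist n) n.-1.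

Definition c (n : nat) : ncpoly := pmul (pmul pa (d n)) pb.

(* letters: false = a, true = b; a series is its coefficient function on words *)
Definition series := seq bool -> int.

Definition sadd (f g : series) : series := fun w => f w + g w.
Definition sopp (f : series) : series := fun w => - f w.
Definition sscale (k : int) (f : series) : series := fun w => k * f w.
Definition smul (f g : series) : series :=
  fun w => \sum_(i < (size w).+1) f (take i w) * g (drop i w).
Definition smono (u : seq bool) : series := fun w => (w == u)%:Z.
Definition s0 : series := fun _ => 0.
Definition s1 : series := smono [::].
Definition sa : series := smono [:: false].
Definition sb : series := smono [:: true].
Definition sexp (f : series) (n : nat) : series := iter n (smul f) s1.

Definition subst_letter (l : letter3) : series :=
  match l with
  | La => sa
  | Lb => sb
  | Lx => sadd (smul sa sb) (sopp (smul sb sa))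
  end.
Definition subst_word (u : seq letter3) : series :=
  foldr (fun l s => smul (subst_letter l) s) s1 u.
Definition subst (p : ncpoly) : series :=
  foldr (fun m s => sadd (sscale m.1 (subst_word m.2)) s) s0 p.

Definition HasSum (F : nat -> series) (S : series) : Prop :=
  forall w, exists N, forall M, (N <= M)%N -> \sum_(n < M) F n w = S w.

From HB Require Import structures.
From mathcomp Require Import all_boot all_order all_algebra.
From mathcomp Require Import boolp zify.
Set Implicit Arguments. Unset Strict Implicit. Unset Printing Implicit Defensive.
Import GRing.Theory.
Local Open Scope ring_scope.

(* Write E m = d_(m+1)(a, b, ab - ba), Esum = sum_m E m and Gsum = sum_n a^n b^n,
   so that sum_(n>=1) c_n(a, b, ab - ba) = a Esum b.  The proof has four parts.
   1. The coefficient functions Z<<a,b>> form a ring (Cauchy product on words).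
   2. Order (valuation) and formal sums of families whose n-th term has order
      >= n; multiplication commutes with such sums, including the Cauchy
      product of two sums, and the contraction principle holds: f = g f h
      with ord g + ord h >= 1 forces f = 0.
   3. Substitution x |-> ab - ba is a ring morphism on the list representation
      of polynomials, so the recursion of d_n becomes a recursion for E m.
      Summing it gives Esum = 1 + Esum X + Esum a (Esum - 1) b with X = ab - ba,
      while Gsum = 1 + a Gsum b.
   4. In any ring these two equations imply that Y = e b g - g b satisfies
      Y = e a Y b, and that 1 - a e b is a left inverse of g once Y = 0.  In
      Z<<a,b>> contraction kills Y, and likewise the defect of the right
      inverse, so 1 - a Esum b is a two-sided inverse of Gsum. *)

Definition der (x : bool) (f : series) : series := fun u => f (x :: u).

Lemma smul_nil (f g : series) : smul f g [::] = f [::] * g [::].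
Proof. by rewrite /smul big_ord_recl big_ord0 addr0. Qed.

Lemma smul_cons (f g : series) x w :
  smul f g (x :: w) = f [::] * g (x :: w) + smul (der x f) g w.
Proof. by rewrite /smul big_ord_recl. Qed.

Section SeriesRing.
Implicit Types f g h : series.

Lemma saddA : associative sadd.
Proof. by move=> f g h; apply: funext => w; rewrite /sadd addrA. Qed.
Lemma saddC : commutative sadd.
Proof. by move=> f g; apply: funext => w; rewrite /sadd addrC. Qed.
Lemma sadd0 : left_id s0 sadd.
Proof. by move=> f; apply: funext => w; rewrite /sadd add0r. Qed.
Lemma saddN : left_inverse s0 sopp sadd.
Proof. by move=> f; apply: funext => w; rewrite /sadd /sopp addNr. Qed.

Lemma smulDl : left_distributive smul sadd.
Proof.
move=> f g h; apply: funext => w; rewrite /smul /sadd -big_split.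
by apply: eq_bigr => i _; rewrite mulrDl.
Qed.

Lemma smulDr : right_distributive smul sadd.
Proof.
move=> f g h; apply: funext => w; rewrite /smul /sadd -big_split.
by apply: eq_bigr => i _; rewrite mulrDr.
Qed.

(* The Leibniz rule for left quotients drives the induction proving associativity. *)
Lemma der_smul x f g :
  der x (smul f g) = sadd (sscale (f [::]) (der x g)) (smul (der x f) g).
Proof. by apply: funext => u; rewrite /der smul_cons. Qed.

Lemma smulA : associative smul.
Proof.
move=> f g h; apply: funext => w.
elim: w f g h => [|x w IH] f g h; first by rewrite !smul_nil mulrA.
rewrite !smul_cons der_smul smulDl smul_nil /sadd /sscale IH /smul.
rewrite mulrDr mulrA mulr_sumr -addrA.
by congr (_ + (_ + _)); apply: eq_bigr => i _; rewrite mulrA.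
Qed.

Lemma smul1l : left_id s1 smul.
Proof.
move=> f; apply: funext => -[|x w]; first by rewrite smul_nil mul1r.
rewrite smul_cons /s1 /smono eqxx mul1r /smul big1 ?addr0 // => i _.
by rewrite /der mul0r.
Qed.

Lemma smul1r : right_id s1 smul.
Proof.
move=> f; apply: funext => w; elim: w f => [|x w IH] f; first by rewrite smul_nil mulr1.
by rewrite smul_cons IH /s1 /smono mulr0 add0r.
Qed.

Lemma s1_neq0 : s1 != s0.
Proof. by apply/eqP => /(congr1 (fun f => f [::])); rewrite /s1 /smono eqxx. Qed.

End SeriesRing.

(* Z<<a,b>> as a ring: equality on series is decided classically (boolp). *)
HB.instance Definition _ := Choice.copy series (seq bool -> int).
HB.instance Definition _ := GRing.isZmodule.Build series saddA saddC sadd0 saddN.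
HB.instance Definition _ :=
  GRing.Zmodule_isNzRing.Build series smulA smul1l smul1r smulDl smulDr s1_neq0.

Lemma series_sumE (I : Type) (r : seq I) (P : pred I) (F : I -> series) w :
  (\sum_(i <- r | P i) F i) w = \sum_(i <- r | P i) F i w.
Proof. by elim/big_rec2: _ => // i y1 y2 _ <-. Qed.

Lemma coefD (f g : series) w : (f + g) w = f w + g w. Proof. by []. Qed.
Lemma coefN (f : series) w : (- f) w = - f w. Proof. by []. Qed.
Lemma coefM (f g : series) w :
  (f * g) w = \sum_(i < (size w).+1) f (take i w) * g (drop i w).
Proof. by []. Qed.

Lemma saddE (f g : series) : sadd f g = f + g. Proof. by []. Qed.
Lemma smulE (f g : series) : smul f g = f * g. Proof. by []. Qed.
Lemma s0E : s0 = 0. Proof. by []. Qed.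
Lemma s1E : s1 = 1. Proof. by []. Qed.

Lemma mulZl k (f g : series) : sscale k f * g = sscale k (f * g).
Proof.
apply: funext => w; rewrite !coefM /sscale mulr_sumr.
by apply: eq_bigr => i _; rewrite mulrA.
Qed.

Lemma mulZr k (f g : series) : f * sscale k g = sscale k (f * g).
Proof.
apply: funext => w; rewrite !coefM /sscale mulr_sumr.
by apply: eq_bigr => i _; rewrite mulrCA.
Qed.

Definition ord_ge (f : series) (n : nat) : Prop :=
  forall w, (size w < n)%N -> f w = 0.

Section Order.
Implicit Types f g h : series.

Lemma ord_ge0 f : ord_ge f 0.
Proof. by []. Qed.

Lemma ord_ge_le f m n : ord_ge f n -> (m <= n)%N -> ord_ge f m.
Proof. by move=> hf lemn w hw; apply: hf; apply: leq_trans lemn. Qed.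

Lemma ord_geD f g n : ord_ge f n -> ord_ge g n -> ord_ge (f + g) n.
Proof. by move=> hf hg w hw; rewrite coefD hf // hg // addr0. Qed.

Lemma ord_geN f n : ord_ge f n -> ord_ge (- f) n.
Proof. by move=> hf w hw; rewrite coefN hf // oppr0. Qed.

Lemma ord_geM f g m n : ord_ge f m -> ord_ge g n -> ord_ge (f * g) (m + n).
Proof.
move=> hf hg w hw; rewrite coefM big1 // => i _.
have hi := ltn_ord i.
have [lt_im | le_mi] := ltnP i m.
  by rewrite hf ?mul0r // size_take_min; lia.
by rewrite hg ?mulr0 // size_drop; lia.
Qed.

Lemma ord_ge_sum (I : Type) (r : seq I) (P : pred I) (F : I -> series) n :
  (forall i, P i -> ord_ge (F i) n) -> ord_ge (\sum_(i <- r | P i) F i) n.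
Proof. by move=> hF; apply: (big_ind (ord_ge ^~ n)) => // f g; apply: ord_geD. Qed.

Lemma ord_ge_letter x : ord_ge (smono [:: x]) 1.
Proof. by case. Qed.

Lemma ord_geX f n : ord_ge f 1 -> ord_ge (f ^+ n) n.
Proof.
move=> hf; elim: n => [|n IH]; first by [].
by rewrite exprS; apply: ord_geM hf IH.
Qed.

Lemma ord_ge_eq0 f : (forall n, ord_ge f n) -> f = 0.
Proof. by move=> hf; apply: funext => w; apply: (hf (size w).+1). Qed.

Lemma contraction f g h m n :
  ord_ge g m -> ord_ge h n -> (0 < m + n)%N -> f = g * f * h -> f = 0.
Proof.
move=> hg hh pos_mn f_eq; apply: ord_ge_eq0; elim=> [|k IH]; first by [].
rewrite f_eq; apply: (ord_ge_le (ord_geM (ord_geM hg IH) hh)); lia.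
Qed.

End Order.

Definition summable (F : nat -> series) : Prop := forall n, ord_ge (F n) n.

(* The sum of such a family: on a word w only the terms n <= size w contribute. *)
Definition ssum (F : nat -> series) : series :=
  fun w => \sum_(n < (size w).+1) F n w.

Section Summation.
Variable F : nat -> series.
Hypothesis sumF : summable F.

Lemma ssum_trunc w M : (size w < M)%N -> ssum F w = \sum_(n < M) F n w.
Proof.
move=> hM; rewrite /ssum (big_ord_widen _ (fun n => F n w) hM) big_mkcond /=.
by apply: eq_bigr => i _; case: ltnP => // hi; rewrite sumF.
Qed.

Lemma HasSum_ssum : HasSum F (ssum F).
Proof. by move=> w; exists (size w).+1 => M hM; rewrite (ssum_trunc hM). Qed.

Lemma ssum_shift : ssum F = F 0 + ssum (fun n => F n.+1).
Proof.
apply: funext => w.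
rewrite coefD /ssum big_ord_recl [in RHS]big_ord_recr /=.
by rewrite (sumF (ltnSn _)) addr0.
Qed.

Lemma ssum_mull g : ssum F * g = ssum (fun n => F n * g).
Proof.
apply: funext => w; rewrite coefM /ssum exchange_big /=.
apply: eq_bigr => i _; rewrite -/(ssum F _) (@ssum_trunc _ (size w).+1) ?mulr_suml //.
by rewrite size_take_min; have := ltn_ord i; lia.
Qed.

Lemma ssum_mulr g : g * ssum F = ssum (fun n => g * F n).
Proof.
apply: funext => w; rewrite coefM /ssum exchange_big /=.
apply: eq_bigr => i _; rewrite -/(ssum F _) (@ssum_trunc _ (size w).+1) ?mulr_sumr //.
by rewrite size_drop; have := ltn_ord i; lia.
Qed.

End Summation.

Lemma summable_shift F : summable F -> summable (fun n => F n.+1).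
Proof. by move=> sumF n; apply: ord_ge_le (sumF n.+1) (leqnSn n). Qed.

Lemma summable_mull F g : summable F -> summable (fun n => F n * g).
Proof. by move=> sumF n; rewrite -[X in ord_ge _ X]addn0; apply: ord_geM. Qed.

Lemma summable_mulr F g : summable F -> summable (fun n => g * F n).
Proof. by move=> sumF n; rewrite -[X in ord_ge _ X]add0n; apply: ord_geM. Qed.

Lemma HasSum_uniq F S S' : HasSum F S -> HasSum F S' -> S = S'.
Proof.
move=> hS hS'; apply: funext => w.
have [N hN] := hS w; have [N' hN'] := hS' w.
by rewrite -(hN (maxn N N')) ?leq_maxl // -(hN' (maxn N N')) ?leq_maxr.
Qed.

Lemma ssumD F G : ssum (fun n => F n + G n) = ssum F + ssum G.
Proof. by apply: funext => w; rewrite coefD /ssum big_split. Qed.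

Lemma sum_square_antidiagonals (h : nat -> nat -> int) N :
  (forall j k, (N <= j + k)%N -> h j k = 0) ->
  \sum_(j < N) \sum_(k < N) h j k = \sum_(p < N) \sum_(i < p.+1) h (p - i)%N i.
Proof.
move=> h_vanish; rewrite exchange_big /=; symmetry.
under eq_bigr => p _ do
  rewrite (big_ord_widen _ (fun i => h (p - i)%N i) (ltn_ord p)) big_mkcond /=.
rewrite exchange_big /=; apply: eq_bigr => i _.
have hi := ltn_ord i.
rewrite -(big_mkord xpredT (fun p => if (i < p.+1)%N then h (p - i)%N i else 0)).
rewrite -(big_mkord xpredT (fun j => h j i)).
rewrite (big_cat_nat _ (n := i)) //=; last by lia.
rewrite [X in X + _]big_nat_cond [X in X + _]big1 ?add0r; last first.
  by move=> p /andP[/andP[_ hp] _]; rewrite ltnS leqNgt hp.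
rewrite -[in X in X = _](add0n i) big_addn.
rewrite [in RHS](big_cat_nat _ (n := (N - i)%N)) //=; last by lia.
rewrite [X in _ = _ + X]big_nat_cond [X in _ = _ + X]big1 ?addr0; last first.
  by move=> j /andP[/andP[hj _] _]; apply: h_vanish; lia.
by apply: eq_big_nat => p _; rewrite ltnS leq_addl addnK.
Qed.

Definition cauchy (F G : nat -> series) (p : nat) : series :=
  \sum_(i < p.+1) F (p - i)%N * G i.

Lemma ssumM F G : summable F -> summable G ->
  ssum F * ssum G = ssum (cauchy F G).
Proof.
move=> sumF sumG; rewrite ssum_mull //.
under eq_fun => j do rewrite ssum_mulr //.
apply: funext => w; rewrite /ssum.
rewrite [RHS](eq_bigr (fun p : 'I__ => \sum_(i < p.+1) (F (p - i)%N * G i) w));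
  last by move=> p _; apply: series_sumE.
apply: (@sum_square_antidiagonals (fun j k => (F j * G k) w)) => j k hjk.
by apply: (ord_geM (sumF j) (sumG k)); lia.
Qed.

Section Substitution.
Implicit Types p q : ncpoly.

Lemma subst_padd p q : subst (padd p q) = subst p + subst q.
Proof. by elim: p => [|m p IH] /=; rewrite ?s0E ?add0r // IH !saddE addrA. Qed.

Lemma subst_psum (ps : seq ncpoly) : subst (psum ps) = \sum_(p <- ps) subst p.
Proof. by elim: ps => [|p ps IH]; rewrite ?big_nil // big_cons subst_padd IH. Qed.

Lemma subst_word_cat u v : subst_word (u ++ v) = subst_word u * subst_word v.
Proof. by elim: u => [|l u IH] /=; rewrite ?s1E ?mul1r // IH !smulE mulrA. Qed.

Lemma subst_monomial_mul (m : int * seq letter3) q :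
  subst [seq ((m.1 * n.1)%R, m.2 ++ n.2) | n <- q] =
  sscale m.1 (subst_word m.2) * subst q.
Proof.
elim: q => [|n q IH] /=; first by rewrite mulr0.
rewrite IH subst_word_cat !saddE mulrDr mulZr [sscale _ _ * subst_word _]mulZl.
congr (_ + _).
by apply: funext => w; rewrite /sscale mulrA (mulrC n.1).
Qed.

Lemma subst_pmul p q : subst (pmul p q) = subst p * subst q.
Proof.
elim: p => [|m p IH]; first by rewrite mul0r.
by rewrite /pmul /= subst_padd subst_monomial_mul -/(pmul p q) IH mulrDl.
Qed.

Lemma subst_pone : subst pone = 1.
Proof. by apply: funext => w; rewrite /subst /= /sadd /sscale mul1r addr0. Qed.

Lemma subst_var l : subst [:: (1, [:: l])] = subst_letter l.
Proof.
rewrite /subst /= saddE smulE mulr1 s0E addr0.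
by apply: funext => w; rewrite /sscale mul1r.
Qed.

End Substitution.

Lemma dlist_SS n : dlist n.+2 = rcons (dlist n.+1) (dnext (dlist n.+1) n.+2).
Proof. by []. Qed.

Lemma size_dlist n : size (dlist n) = n.
Proof. by elim: n => [|[|n] IH] //; rewrite dlist_SS size_rcons IH. Qed.

Lemma dlist_nth n k : (k < n)%N -> nth [::] (dlist n) k = d k.+1.
Proof.
elim: n => [//|n IH] lt_kn; have [lt_kn' | ge_kn] := ltnP k n; last first.
  by have -> : k = n by lia.
by case: n IH lt_kn lt_kn' => [//|n] IH _ lt_kn; rewrite dlist_SS nth_rcons size_dlist lt_kn IH.
Qed.

Lemma d_rec n : d n.+2 = dnext (dlist n.+1) n.+2.
Proof. by rewrite /d dlist_SS nth_rcons size_dlist ltnn eqxx. Qed.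

Definition X : series := sa * sb - sb * sa.
Definition E (m : nat) : series := subst (d m.+1).

Lemma E0 : E 0 = 1.
Proof. exact: subst_pone. Qed.

Lemma E_rec m :
  E m.+1 = E m * X + \sum_(i < m) E (m.-1 - i) * sa * (E i.+1 * sb).
Proof.
rewrite /E d_rec /dnext subst_padd subst_pmul subst_var dlist_nth //.
congr (_ + _); rewrite subst_psum big_map !subSS subn0.
rewrite (_ : iota 2 m = map (addn 2) (iota 0 m)); last by rewrite -iotaDl.
rewrite big_map -{1}(subn0 m) -/(index_iota 0 m) big_mkord.
apply: eq_bigr => i _; have lt_im := ltn_ord i.
rewrite !subst_pmul !subst_var !dlist_nth ?mulrA; try lia.
by have -> : ((m.+2 - (2 + i)).-1.+1 = (m.-1 - i).+1)%N by lia.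
Qed.

Lemma ord_ge_X : ord_ge X 2.
Proof.
have ord_ge_ab x y : ord_ge (smono [:: x] * smono [:: y]) 2.
  exact: ord_geM (ord_ge_letter x) (ord_ge_letter y).
by apply: ord_geD; last apply: ord_geN; apply: ord_ge_ab.
Qed.

Lemma E_summable : summable E.
Proof.
elim/ltn_ind => -[|m] IH; first by [].
rewrite E_rec; apply: ord_geD.
  by apply: (ord_ge_le (ord_geM (IH m (ltnSn m)) ord_ge_X)); rewrite addn2.
apply: ord_ge_sum => i _; have lt_im := ltn_ord i.
have hE j : (j <= m)%N -> ord_ge (E j) j by move=> le_jm; apply: IH; rewrite ltnS.
have le_jm : (m.-1 - i <= m)%N by lia.
have := ord_geM (ord_geM (hE _ le_jm) (ord_ge_letter false))
                (ord_geM (hE i.+1 lt_im) (ord_ge_letter true)).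
by move/ord_ge_le; apply; lia.
Qed.

Definition Esum : series := ssum E.

Lemma Esum_eq : Esum = 1 + Esum * X + Esum * sa * (Esum - 1) * sb.
Proof.
have sumE' := summable_shift E_summable.
have Esum_shift : Esum = 1 + ssum (fun m => E m.+1).
  by rewrite /Esum (ssum_shift E_summable) E0.
have -> : Esum - 1 = ssum (fun m => E m.+1) by rewrite Esum_shift addrC addKr.
rewrite {1}Esum_shift -addrA; congr (_ + _).
pose C m := \sum_(i < m) E (m.-1 - i) * sa * (E i.+1 * sb).
have C_eq m : C m = E m.+1 - E m * X by rewrite E_rec addrC addKr.
have sumC : summable C.
  move=> m; rewrite C_eq; apply: ord_geD; first exact: sumE'.
  exact: ord_geN (@summable_mull E X E_summable m).
rewrite [LHS](_ : _ = ssum (fun m => E m * X + C m)); last first.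
  by congr ssum; apply: funext => m; rewrite E_rec.
rewrite ssumD -(ssum_mull E_summable); congr (_ + _).
rewrite (ssum_shift sumC) [C 0]big_ord0 add0r.
rewrite (ssum_mull E_summable) -mulrA (ssum_mull sumE').
by rewrite ssumM //; [apply: summable_mull E_summable | apply: summable_mull sumE'].
Qed.

Lemma sexpE (f : series) n : sexp f n = f ^+ n.
Proof. by elim: n => [|n IH]; rewrite ?expr0 // exprS -IH. Qed.

Definition Gsum : series := ssum (fun n => sa ^+ n * sb ^+ n).

Lemma Gsum_summable : summable (fun n => sa ^+ n * sb ^+ n).
Proof.
move=> n; apply: ord_ge_le (leq_addr n n).
by apply: ord_geM; apply: ord_geX; apply: ord_ge_letter.
Qed.

Lemma Gsum_eq : Gsum = 1 + sa * Gsum * sb.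
Proof.
rewrite {1}/Gsum (ssum_shift Gsum_summable) !expr0 mulr1; congr (_ + _).
rewrite /Gsum (ssum_mulr Gsum_summable) (ssum_mull (summable_mulr sa Gsum_summable)).
by congr ssum; apply: funext => n; rewrite exprS exprSr !mulrA.
Qed.

Section InverseAlgebra.
Variables (R : ringType) (a b e g : R).
Hypothesis e_eq : e = 1 + e * (a * b - b * a) + e * a * (e - 1) * b.
Hypothesis g_eq : g = 1 + a * g * b.

Lemma agb_eq : a * g * b = g - 1.
Proof. by rewrite [in RHS]g_eq addrC addKr. Qed.

Lemma eaeb_eq : e * a * e * b = e - 1 + e * b * a.
Proof.
rewrite {3}e_eq -[1 + _ + _]addrA [1 + _]addrC addrK.
rewrite !(mulrBr, mulrBl) mulr1 !mulrA.
by rewrite [X in X + _]addrC addrA subrK subrK.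
Qed.

Lemma commutator_fixed : e * a * (e * b * g - g * b) * b = e * b * g - g * b.
Proof.
have ebagb : e * b * a * g * b = e * b * g - e * b.
  by rewrite -!mulrA (mulrA a) agb_eq mulrBr mulrBr mulr1 !mulrA.
have eagbb : e * a * g * b * b = e * g * b - e * b.
  by rewrite -(mulrA e a) -(mulrA e) agb_eq mulrBr mulr1 mulrBl.
rewrite mulrBr mulrBl !mulrA eaeb_eq !mulrDl mulN1r mulNr ebagb eagbb opprB.
by rewrite !addrA subrK addrAC [e * g * b - _]addrC addrK addrC.
Qed.

Lemma left_inverse : e * b * g = g * b -> (1 - a * e * b) * g = 1.
Proof.
move=> ebg_eq; rewrite mulrBl mul1r.
have -> : a * e * b * g = a * (e * b * g) by rewrite !mulrA.
rewrite ebg_eq mulrA agb_eq.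
by rewrite opprB addrC subrK.
Qed.

(* Given a left inverse h, the defect g h - 1 is fixed by right
   multiplication with -(a g b); in series this forces it to vanish. *)
Lemma right_defect h : h * g = 1 -> g * h - 1 = (g * h - 1) * - (a * g * b).
Proof.
move=> hg1; rewrite agb_eq opprB mulrBr mulr1 mulrBl -mulrA hg1 mulr1 mul1r.
by rewrite subrr subr0.
Qed.

End InverseAlgebra.

(* Gsum is invertible with inverse 1 - a Esum b; the two contraction steps turn
   the fixed-point identities of InverseAlgebra into equalities. *)
Lemma Gsum_inverse :
  (1 - sa * Esum * sb) * Gsum = 1 /\ Gsum * (1 - sa * Esum * sb) = 1.
Proof.
have comm : Esum * sb * Gsum = Gsum * sb.
  apply: subr0_eq.
  apply: (contraction (g := Esum * sa) (h := sb) (m := 1) (n := 1)) => //.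
  - exact: ord_geM (ord_ge0 Esum) (ord_ge_letter false).
  - exact: ord_ge_letter.
  - by rewrite (commutator_fixed Esum_eq Gsum_eq).
have left := left_inverse Gsum_eq comm.
split => //; apply: subr0_eq.
apply: (contraction (g := 1) (h := - (sa * Gsum * sb)) (m := 0) (n := 2)) => //.
- apply/ord_geN/(ord_geM (m := 1)); last exact: ord_ge_letter.
  exact: ord_geM (ord_ge_letter false) (ord_ge0 Gsum).
- by rewrite mul1r -(right_defect Gsum_eq left).
Qed.

Theorem theorem1 :
  let C := fun n : nat => subst (c n.+1) in
  let G := fun n : nat => smul (sexp sa n) (sexp sb n) in
  (exists S, HasSum C S) /\ (exists T, HasSum G T) /\
  forall S T, HasSum C S -> HasSum G T ->
    smul (sadd s1 (sopp S)) T = s1 /\ smul T (sadd s1 (sopp S)) = s1.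
Proof.
move=> C G.
have C_eq : C = fun n => sa * E n * sb.
  by apply: funext => n; rewrite /C /c !subst_pmul !subst_var.
have G_eq : G = fun n => sa ^+ n * sb ^+ n.
  by apply: funext => n; rewrite /G !sexpE.
have sumC : summable C by rewrite C_eq; exact/summable_mull/summable_mulr/E_summable.
have sumG : summable G by rewrite G_eq; exact: Gsum_summable.
split; first by exists (ssum C); exact: HasSum_ssum.
split; first by exists (ssum G); exact: HasSum_ssum.
move=> S T hS hT.
have -> : S = sa * Esum * sb.
  rewrite (HasSum_uniq hS (HasSum_ssum sumC)) C_eq /Esum (ssum_mulr E_summable).
  by rewrite (ssum_mull (summable_mulr sa E_summable)).
have -> : T = Gsum by rewrite (HasSum_uniq hT (HasSum_ssum sumG)) G_eq.
exact: Gsum_inverse.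
Qed.
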